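(* If $P\in\mathfrak p_{\mathbb C}$ preserves some supersymmetry, i.e. there exists $0\ne\xi\in\mathbb C^{16}$ with $\sum_{I,A}\Gamma^I_{\dot AA}P^A\xi^I=0$ for all $\dot A=1,\dots,128$, then $P$ is a nilpotent element of $(\mathfrak e_8)_{\mathbb C}$. In particular, for every supersymmetric solution of the timelike class, $P_z$ is nilpotent at every point of spacetime.
   Context: $(\mathfrak e_8)_{\mathbb C}=\mathfrak{so}(16)_{\mathbb C}\oplus\mathfrak p_{\mathbb C}$ with $\mathfrak{so}(16)$ generators $X^{IJ}$ and $\mathfrak p_{\mathbb C}$ spanned by $Y^A$, $A=1,\dots,128$, with $[X^{IJ},Y^A]=-\tfrac12\Gamma^{IJ}_{AB}Y^B$, $[Y^A,Y^B]=\tfrac12\Gamma^{IJ}_{AB}X^{IJ}$; $\Gamma^I_{A\dot A}$ are real chiral blocks of $SO(16)$ gamma matrices, $\Gamma^{IJ}_{AB}=\tfrac12(\Gamma^I_{A\dot A}\Gamma^J_{\dot AB}-\Gamma^J_{A\dot A}\Gamma^I_{\dot AB})$, and $P=P^AY^A$. An element is nilpotent if its adjoint action is nilpotent. In the timelike class, $P_z$ is the $z$-component of $P=\tfrac{1-\theta}{2}V^{-1}dV$ and supersymmetry requires $\bar\zeta^I\Gamma^I_{\dot AA}P^A_z=0$ with $\zeta^I=\epsilon^I_1+i\epsilon^I_2$ not identically zero. *)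

From HB Require Import structures.
From mathcomp Require Import all_boot all_order all_algebra.
Set Implicit Arguments. Unset Strict Implicit. Unset Printing Implicit Defensive.
Import Order.TTheory GRing.Theory Num.Theory.
Local Open Scope ring_scope.

Section E8.
Variable C : numClosedFieldType.

(* Real chiral blocks of SO(16) gamma matrices: g I is the 128x128 matrix
   with (g I) A Adot = Gamma^I_{A Adot}; the other block is its transpose,
   Gamma^I_{Adot A} = Gamma^I_{A Adot}. *)
Definition gamma_blocks (g : 'I_16 -> 'M[C]_128) : Prop :=
  (forall I A Ad, g I A Ad \is Num.real) /\
  (forall I J : 'I_16,
      g I *m (g J)^T + g J *m (g I)^T = ((I == J)%:R *+ 2)%:M) /\
  (forall I J : 'I_16,
      (g I)^T *m g J + (g J)^T *m g I = ((I == J)%:R *+ 2)%:M).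

Definition GammaIJ (g : 'I_16 -> 'M[C]_128) (I J : 'I_16) : 'M[C]_128 :=
  2^-1 *: (g I *m (g J)^T - g J *m (g I)^T).

(* An element of (e8)_C = so(16)_C (+) p_C is encoded as a pair (a, y) with
   a an antisymmetric 16x16 matrix and y a row vector in C^128, standing for
   sum_{I,J} a_{IJ} X^{IJ} + sum_A y_A Y^A. *)
Definition e8_elt (x : 'M[C]_16 * 'rV[C]_128) : Prop := x.1^T = - x.1.

(* ad_P for P = sum_A P_A Y^A, computed from the brackets
   [Y^A, Y^B] = 1/2 Gamma^{IJ}_{AB} X^{IJ},
   [P, X^{IJ}] = - [X^{IJ}, P] = 1/2 Gamma^{IJ}_{AB} P^A Y^B. *)
Definition adP (g : 'I_16 -> 'M[C]_128) (P : 'rV[C]_128)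
    (x : 'M[C]_16 * 'rV[C]_128) : 'M[C]_16 * 'rV[C]_128 :=
  (\matrix_(I, J) (2^-1 * (P *m GammaIJ g I J *m x.2^T) 0 0),
   2^-1 *: \sum_(I < 16) \sum_(J < 16) x.1 I J *: (P *m GammaIJ g I J)).

Definition nilpotent_in_e8 (g : 'I_16 -> 'M[C]_128) (P : 'rV[C]_128) : Prop :=
  exists n : nat, forall x, e8_elt x -> iter n (adP g P) x = (0, 0).

Definition preserves_susy (g : 'I_16 -> 'M[C]_128) (P : 'rV[C]_128) : Prop :=
  exists xi : 'rV[C]_16, xi != 0 /\
    forall Ad : 'I_128,
      \sum_(I < 16) \sum_(A < 128) g I A Ad * P 0 A * xi 0 I = 0.

End E8.

From HB Require Import structures.
From mathcomp Require Import all_boot all_order all_algebra ring.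
Import Order.TTheory GRing.Theory Num.Theory.
Set Implicit Arguments. Unset Strict Implicit. Unset Printing Implicit Defensive.
Local Open Scope ring_scope.

(* Put G := sum_I xi^I Gamma^I.  Supersymmetry says P G = 0, and the Clifford
   relations give g_I G^T + G g_I^T = 2 xi^I and G G^T = G^T G = xi.xi.  If
   xi.xi <> 0 this forces P = 0.  If xi is null, ad_P lowers a filtration:
   [P, p] consists of elements of so(16) having xi as an eigenvector,
   [P, -] maps those into ker(. G), [P, ker(. G)] consists of wedges xi /\ q
   with q orthogonal to xi, and [P, xi /\ q] = 0.  So (ad_P)^5 = 0 on the whole
   of so(16) (+) p; only the Clifford relations of the gamma matrices are used. *)

Lemma mxZE (R : pzSemiRingType) m n (a : R) (A : 'M[R]_(m, n)) i j :
  (a *: A) i j = a * A i j.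
Proof. by rewrite mxE. Qed.

Lemma mxBE (R : pzRingType) m n (A B : 'M[R]_(m, n)) i j :
  (A - B) i j = A i j - B i j.
Proof. by rewrite !mxE. Qed.

Lemma antisym_mxE (R : pzRingType) n (a : 'M[R]_n) i j :
  a^T = - a -> a i j = - a j i.
Proof. by move/matrixP/(_ j i); rewrite !mxE. Qed.

Section CliffordCombination.
Variables (R : comPzRingType) (n m : nat).
Implicit Types (u v : 'I_n -> R) (h k : 'I_n -> 'M[R]_m).

Definition combmx v h : 'M[R]_m := \sum_i v i *: h i.

Definition dotv u v : R := \sum_i u i * v i.

Definition clifford_pair h k :=
  forall i j, h i *m k j + h j *m k i = ((i == j)%:R *+ 2)%:M.

Lemma sum_mul_delta v i : \sum_j v j * (i == j)%:R = v i.
Proof.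
under eq_bigr do rewrite mulr_natr mulrb eq_sym.
by rewrite -big_mkcond big_pred1_eq.
Qed.

Lemma mulmx_combmx p (A : 'M[R]_(p, m)) v h :
  A *m combmx v h = \sum_i v i *: (A *m h i).
Proof. by rewrite mulmx_sumr; apply: eq_bigr => i _; rewrite scalemxAr. Qed.

Lemma trmx_combmx v h : (combmx v h)^T = combmx v (fun i => (h i)^T).
Proof. by rewrite /combmx linear_sum; apply: eq_bigr => i _; rewrite linearZ. Qed.

Lemma clifford_mul_combmx h k i v : clifford_pair h k ->
  h i *m combmx v k + combmx v h *m k i = (v i *+ 2)%:M.
Proof.
move=> hk; rewrite mulmx_combmx mulmx_suml -big_split /=.
under eq_bigr do rewrite -scalemxAl -scalerDr hk scale_scalar_mx mulrnAr.
by rewrite -raddf_sum /= sumrMnl sum_mul_delta.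
Qed.

Lemma clifford_combmx h k u v : clifford_pair h k ->
  combmx u h *m combmx v k + combmx v h *m combmx u k = (dotv u v *+ 2)%:M.
Proof.
move=> hk; rewrite [X in _ + X]mulmx_combmx mulmx_suml -big_split /=.
under eq_bigr do rewrite -scalemxAl -scalerDr clifford_mul_combmx //.
under eq_bigr do rewrite scale_scalar_mx mulrnAr.
by rewrite -raddf_sum /= sumrMnl.
Qed.

End CliffordCombination.

Section SupersymmetricElement.
Variables (C : numClosedFieldType) (g : 'I_16 -> 'M[C]_128).
Hypothesis g_gt : clifford_pair g (fun I => (g I)^T).
Hypothesis gt_g : clifford_pair (fun I => (g I)^T) g.
Variables (P : 'rV[C]_128) (x : 'I_16 -> C).
Hypothesis PG0 : P *m combmx x g = 0.

Local Notation G := (combmx x g).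

Lemma two_neq0 : (2 : C) != 0.
Proof. by rewrite pnatr_eq0. Qed.

Lemma double_mx_eq0 p q (M : 'M[C]_(p, q)) : M + M = 0 -> M = 0.
Proof.
move=> MM0; apply/eqP; have := scaler_eq0 2 M.
by rewrite (negbTE two_neq0) scaler_nat mulr2n MM0 eqxx.
Qed.

Lemma half_double (z : C) : 2^-1 * (z *+ 2) = z.
Proof. by rewrite -[z *+ 2]mulr_natr mulrCA mulVf ?two_neq0 ?mulr1. Qed.

Lemma mul_g_Gt I : g I *m G^T + G *m (g I)^T = (x I *+ 2)%:M.
Proof. by rewrite trmx_combmx; apply: clifford_mul_combmx. Qed.

Lemma mul_gt_G I : (g I)^T *m G + G^T *m g I = (x I *+ 2)%:M.
Proof. by rewrite trmx_combmx; apply: clifford_mul_combmx. Qed.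

Lemma mul_kerG_g_Gt (y : 'rV[C]_128) I :
  y *m G = 0 -> y *m g I *m G^T = (x I *+ 2) *: y.
Proof.
move=> yG0; have := congr1 (mulmx y) (mul_g_Gt I).
by rewrite mulmxDr !mulmxA yG0 mul0mx addr0 mul_mx_scalar.
Qed.

Lemma P_sum_GammaIJ I : P *m (\sum_J x J *: GammaIJ g I J) = x I *: P.
Proof.
have -> : \sum_J x J *: GammaIJ g I J = 2^-1 *: (g I *m G^T - G *m (g I)^T).
  rewrite trmx_combmx mulmx_combmx mulmx_suml -sumrB scaler_sumr.
  apply: eq_bigr => J _; rewrite /GammaIJ scalerA mulrC -scalerA.
  by rewrite -scalemxAl -scalerBr.
rewrite -scalemxAr mulmxBr !mulmxA mul_kerG_g_Gt // PG0 mul0mx subr0 scalerA.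
by rewrite half_double.
Qed.

Lemma P_g_gt_G I J : P *m g I *m (g J)^T *m G
  = (x J *+ 2) *: (P *m g I) - (x I *+ 2) *: (P *m g J).
Proof.
rewrite -mulmxA.
have -> : (g J)^T *m G = (x J *+ 2)%:M - G^T *m g J by rewrite -(mul_gt_G J) addrK.
by rewrite mulmxBr mul_mx_scalar !mulmxA mul_kerG_g_Gt // -scalemxAl.
Qed.

Lemma sum_xline_P_g c : \sum_I (c * x I) *: (P *m g I) = 0.
Proof.
rewrite -mulmx_combmx.
have -> : combmx (fun I => c * x I) g = c *: G.
  by rewrite scaler_sumr; apply: eq_bigr => I _; rewrite scalerA.
by rewrite -scalemxAr PG0 scaler0.
Qed.

Definition adP_so (y : 'rV[C]_128) : 'M[C]_16 :=
  \matrix_(I, J) (2^-1 * (P *m GammaIJ g I J *m y^T) 0 0).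

Definition adP_p (a : 'M[C]_16) : 'rV[C]_128 :=
  2^-1 *: \sum_(I < 16) \sum_(J < 16) a I J *: (P *m GammaIJ g I J).

Lemma adPE z : adP g P z = (adP_so z.2, adP_p z.1).
Proof. by []. Qed.

Lemma adP_soE y I J : adP_so y I J = 2^-1 * (P *m GammaIJ g I J *m y^T) 0 0.
Proof. by rewrite mxE. Qed.

Lemma adP_so0 : adP_so 0 = 0.
Proof. by apply/matrixP => I J; rewrite adP_soE trmx0 mulmx0 !mxE mulr0. Qed.

Lemma GammaIJC I J : GammaIJ g J I = - GammaIJ g I J.
Proof. by rewrite /GammaIJ -scalerN opprB. Qed.

Lemma adP_so_antisym y : (adP_so y)^T = - adP_so y.
Proof.
apply/matrixP => I J; rewrite [LHS]mxE [RHS]mxE !adP_soE GammaIJC.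
by rewrite mulmxN mulNmx [in LHS]mxE mulrN.
Qed.

Definition preserves_xline (a : 'M[C]_16) :=
  exists l, forall I, \sum_J a I J * x J = l * x I.

Lemma adP_so_preserves_xline y : preserves_xline (adP_so y).
Proof.
exists (2^-1 * (P *m y^T) 0 0) => I.
have := congr1 (fun M : 'rV[C]_128 => (M *m y^T) 0 0) (P_sum_GammaIJ I).
rewrite /= mulmx_sumr mulmx_suml summxE -scalemxAl mxE => sumE.
rewrite -mulrA [_ * x I]mulrC -sumE mulr_sumr.
by apply: eq_bigr => J _; rewrite adP_soE -(scalemxAr (x J)) -(scalemxAl (x J))
   [X in _ = _ * X]mxE mulrAC mulrA.
Qed.

Lemma adP_p_antisym a : a^T = - a ->
  adP_p a = 2^-1 *: \sum_I \sum_J a I J *: (P *m g I *m (g J)^T).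
Proof.
move=> a_anti; pose S := \sum_I \sum_J (a I J * 2^-1) *: (P *m g I *m (g J)^T).
rewrite /adP_p /GammaIJ.
under eq_bigr do under eq_bigr do rewrite -scalemxAr mulmxBr !mulmxA scalerA scalerBr.
under eq_bigr do rewrite sumrB.
rewrite sumrB [X in _ - X]exchange_big /=.
have -> : \sum_J \sum_I (a I J * 2^-1) *: (P *m g J *m (g I)^T) = - S.
  rewrite -sumrN; apply: eq_bigr => J _; rewrite -sumrN.
  by apply: eq_bigr => I _; rewrite (antisym_mxE _ _ a_anti) mulNr scaleNr.
rewrite opprK -mulr2n /S; congr (_ *: _).
rewrite -sumrMnl; apply: eq_bigr => I _; rewrite -sumrMnl; apply: eq_bigr => J _.
by rewrite scalerMnl mulrC -mulrnAr half_double.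
Qed.

Lemma sum_mulmx_g_gt (u v : 'I_16 -> C) :
  \sum_I \sum_J (u I * v J) *: (P *m g I *m (g J)^T)
  = P *m combmx u g *m (combmx v g)^T.
Proof.
rewrite trmx_combmx !mulmx_combmx exchange_big; apply: eq_bigr => J _ /=.
rewrite mulmx_suml scaler_sumr; apply: eq_bigr => I _.
by rewrite -scalemxAl scalerA mulrC.
Qed.

Lemma adP_p_kerG a : a^T = - a -> preserves_xline a -> adP_p a *m G = 0.
Proof.
move=> a_anti [l al].
have rowE I : \sum_J a I J * (x J *+ 2) = l *+ 2 * x I.
  by under eq_bigr do rewrite mulrnAr; rewrite sumrMnl al mulrnAl.
have colE J : \sum_I a I J * (x I *+ 2) = - (l *+ 2) * x J.
  rewrite mulNr -rowE -sumrN; apply: eq_bigr => I _.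
  by rewrite (antisym_mxE _ _ a_anti) mulNr.
rewrite adP_p_antisym // -scalemxAl mulmx_suml.
under eq_bigr do rewrite mulmx_suml.
under eq_bigr do under eq_bigr do rewrite -scalemxAl P_g_gt_G scalerBr !scalerA.
under eq_bigr do rewrite sumrB.
rewrite sumrB [X in _ - X]exchange_big /=.
under eq_bigr do rewrite -scaler_suml rowE.
under [X in _ - X]eq_bigr do rewrite -scaler_suml colE.
by rewrite !sum_xline_P_g subr0 scaler0.
Qed.

Lemma P_eq0_nonnull : dotv x x != 0 -> P = 0.
Proof.
move=> xx0; have := congr1 (mulmx P) (clifford_combmx x x g_gt).
rewrite mulmxDr !mulmxA -trmx_combmx PG0 !mul0mx addr0 mul_mx_scalar.
move/esym/eqP; rewrite scaler_eq0 -mulr_natr mulf_eq0 (negbTE xx0) /=.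
by rewrite (negbTE two_neq0) /= => /eqP.
Qed.

Section NullSpinor.
Hypothesis x_null : dotv x x = 0.
Variable K : 'I_16.
Hypothesis xK0 : x K != 0.

Lemma G_Gt : G *m G^T = 0.
Proof.
apply: double_mx_eq0; rewrite trmx_combmx.
by rewrite clifford_combmx // x_null mul0rn raddf0.
Qed.

Lemma Gt_G : G^T *m G = 0.
Proof.
apply: double_mx_eq0; rewrite trmx_combmx.
by rewrite clifford_combmx // x_null mul0rn raddf0.
Qed.

Let c := (x K *+ 2)^-1.

Lemma kerG_imGt (y : 'rV[C]_128) : y *m G = 0 -> y = c *: (y *m g K *m G^T).
Proof.
move=> yG0; rewrite mul_kerG_g_Gt // scalerA mulVf ?scale1r //.
by rewrite -mulr_natr mulf_neq0 ?two_neq0.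
Qed.

Lemma Gt_g_gt_G I J : G^T *m g I *m (g J)^T *m G
  = (x I *+ 2) *: ((g J)^T *m G) - (x J *+ 2) *: ((g I)^T *m G).
Proof.
have GtgI : G^T *m g I = (x I *+ 2)%:M - (g I)^T *m G.
  by rewrite -(mul_gt_G I) [_ + G^T *m _]addrC addrK.
have GgJt : G *m (g J)^T = (x J *+ 2)%:M - g J *m G^T.
  by rewrite -(mul_g_Gt J) [_ + G *m _]addrC addrK.
have gIt_G_gJt_G : (g I)^T *m G *m (g J)^T *m G = (x J *+ 2) *: ((g I)^T *m G).
  rewrite -(mulmxA _ G) GgJt mulmxBr mul_mx_scalar mulmxBl -scalemxAl.
  by rewrite -!mulmxA Gt_G !mulmx0 subr0.
by rewrite GtgI !mulmxBl mul_scalar_mx -!scalemxAl gIt_G_gJt_G.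
Qed.

Definition x_wedge (a : 'M[C]_16) :=
  exists q, dotv x q = 0 /\ forall I J, a I J = x I * q J - x J * q I.

Lemma adP_so_x_wedge y : y *m G = 0 -> x_wedge (adP_so y).
Proof.
move=> yG0.
pose s J := (P *m g K *m (g J)^T *m G *m (g K)^T *m y^T) 0 0.
have PggyE I J : (P *m g I *m (g J)^T *m y^T) 0 0
    = c ^+ 2 * ((x I *+ 2) * s J - (x J *+ 2) * s I).
  (* Both P and y factor through G^T, so the entry becomes a sandwich of
     G^T g_I g_J^T G, which Gt_g_gt_G evaluates. *)
  have ytE : y^T = c *: (G *m (g K)^T *m y^T).
    by rewrite {1}(kerG_imGt yG0) linearZ /= !trmx_mul trmxK mulmxA.
  have -> : P *m g I *m (g J)^T *m y^T
     = c ^+ 2 *: (P *m g K *m (G^T *m g I *m (g J)^T *m G) *m (g K)^T *m y^T).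
    rewrite [in LHS](kerG_imGt PG0) [in LHS]ytE -!scalemxAl -scalemxAr scalerA.
    by rewrite expr2 !mulmxA.
  rewrite Gt_g_gt_G mulmxBr !mulmxBl -!scalemxAr -!scalemxAl.
  by rewrite mxZE mxBE !mxZE /s !mulmxA.
exists (fun J => c ^+ 2 * s J); split.
  have sum0 : \sum_J x J * s J = 0.
    transitivity ((P *m g K *m (G^T *m G) *m (g K)^T *m y^T) 0 0); last first.
      by rewrite Gt_G mulmx0 !mul0mx mxE.
    rewrite [in RHS]trmx_combmx mulmx_suml mulmx_sumr !mulmx_suml summxE.
    apply: eq_bigr => J _.
    by rewrite -scalemxAl -scalemxAr -!scalemxAl mxZE /s !mulmxA.
  rewrite /dotv; under eq_bigr do rewrite mulrCA.
  by rewrite -mulr_sumr sum0 mulr0.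
move=> I J; rewrite adP_soE /GammaIJ -scalemxAr -scalemxAl mulmxBr mulmxBl !mulmxA.
rewrite mxZE mxBE !PggyE.
by field.
Qed.

Lemma P_combmx_Gt q : dotv x q = 0 -> P *m combmx q g *m G^T = 0.
Proof.
move=> xq0; have := clifford_combmx x q gt_g.
rewrite -!trmx_combmx xq0 mul0rn raddf0 => /eqP; rewrite addr_eq0 => /eqP GtQ.
rewrite (kerG_imGt PG0) -!scalemxAl -!mulmxA (mulmxA G^T) GtQ mulNmx.
by rewrite -mulmxA G_Gt mulmx0 oppr0 !mulmx0 scaler0.
Qed.

Lemma adP_p_x_wedge a : x_wedge a -> adP_p a = 0.
Proof.
case=> q [xq0 aE]; rewrite adP_p_antisym; last first.
  by apply/matrixP => I J; rewrite !mxE !aE opprB.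
under eq_bigr => I _ do under eq_bigr => J _ do rewrite aE [x J * _]mulrC scalerBl.
under eq_bigr do rewrite sumrB.
rewrite sumrB !sum_mulmx_g_gt.
by rewrite PG0 P_combmx_Gt // !mul0mx subr0 scaler0.
Qed.

Lemma adP_p_so_p_so y : adP_p (adP_so (adP_p (adP_so y))) = 0.
Proof.
apply/adP_p_x_wedge/adP_so_x_wedge/adP_p_kerG.
  exact: adP_so_antisym.
exact: adP_so_preserves_xline.
Qed.

Lemma adP_iter5 z : iter 5 (adP g P) z = (0, 0).
Proof. by rewrite /= !adPE /= !adP_p_so_p_so adP_so0. Qed.

End NullSpinor.
End SupersymmetricElement.

Lemma nilpotent_in_e8_0 (C : numClosedFieldType) (g : 'I_16 -> 'M[C]_128) :
  nilpotent_in_e8 g 0.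
Proof.
exists 1 => z _; congr (_, _).
  by apply/matrixP => I J; rewrite mxE !mul0mx !mxE mulr0.
by rewrite big1 ?scaler0 // => I _; rewrite big1 // => J _; rewrite !mul0mx scaler0.
Qed.

Lemma susy_mulmx_combmx (C : numClosedFieldType) (g : 'I_16 -> 'M[C]_128)
    (P : 'rV[C]_128) (xi : 'rV[C]_16) :
  (forall Ad, \sum_(I < 16) \sum_(A < 128) g I A Ad * P 0 A * xi 0 I = 0) ->
  P *m combmx (xi 0) g = 0.
Proof.
move=> susy; apply/rowP => Ad; rewrite [RHS]mxE -(susy Ad) mulmx_combmx summxE.
apply: eq_bigr => I _; rewrite mxZE mxE mulr_sumr.
by apply: eq_bigr => A _; rewrite mulrC [P 0 A * _]mulrC.
Qed.

Theorem mainTheorem4 (C : numClosedFieldType) (g : 'I_16 -> 'M[C]_128)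
    (P : 'rV[C]_128) :
  gamma_blocks g -> preserves_susy g P -> nilpotent_in_e8 g P.
Proof.
move=> [_ [g_gt gt_g]] [xi [xi0 /susy_mulmx_combmx PG0]].
have [x_null | x_nonnull] := eqVneq (dotv (xi 0) (xi 0)) 0; last first.
  by rewrite (P_eq0_nonnull g_gt PG0 x_nonnull); exact: nilpotent_in_e8_0.
have [K xK0] : exists K, xi 0 K != 0.
  apply/existsP; apply: contraR xi0 => /existsPn xi_eq0.
  by apply/eqP/rowP => K; rewrite mxE; apply/eqP/negbNE/xi_eq0.
by exists 5 => z _; exact: (adP_iter5 g_gt gt_g PG0 x_null xK0).
Qed.
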